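(* For $s\in\mathcal S(0)$ and $\theta\in\Theta$ let $U_s(\theta)=\int_0^\theta s(x)\,dx+v(\theta)$ (the payoff of type $\theta$ under interim status $s$ when the lowest level is free and prices are nonnegative). Then $U_{1/2}(\theta)\ge U_s(\theta)$ for all $\theta\in\Theta$ and all $s\in\mathcal S(0)$ (where $U_{1/2}$ corresponds to $s\equiv\frac12$) if and only if $F(\theta)\le\theta/\bar\theta$ for all $\theta\in\Theta$. In particular, this holds whenever $f$ is nondecreasing on $\Theta$.
   Context: Let $0<\bar\theta<\infty$, $\Theta=[0,\bar\theta]$, $F$ a cdf on $\Theta$ with continuous, strictly positive density $f$, $dF=f\,d\theta$. The intrinsic value $v:\Theta\to[0,\infty)$ is differentiable. For bounded measurable $a,b$ on $\Theta$, write $b\in\mathrm{MPS}(a)$ if $\int_x^{\bar\theta}b\,dF\le\int_x^{\bar\theta}a\,dF$ for all $x\in\Theta$, with equality at $x=0$. $\mathcal S(0)$ is the set of nondecreasing $s:\Theta\to[0,1]$ with $s\in\mathrm{MPS}(F)$. *)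

From Stdlib Require Import Reals.
From Coquelicot Require Import Coquelicot.
Open Scope R_scope.

Definition inTheta (thbar x : R) : Prop := 0 <= x <= thbar.

Definition cont_on_Theta (thbar : R) (f : R -> R) : Prop :=
  forall x, inTheta thbar x ->
    filterlim f (within (inTheta thbar) (locally x)) (locally (f x)).

Definition diff_on_Theta (thbar : R) (v : R -> R) : Prop :=
  forall x, inTheta thbar x -> exists l : R,
    filterlim (fun y => (v y - v x) / (y - x))
      (within (fun y => inTheta thbar y /\ y <> x) (locally x)) (locally l).

Definition is_cdf_with_density (thbar : R) (F f : R -> R) : Prop :=
  (forall x, inTheta thbar x -> 0 < f x) /\
  cont_on_Theta thbar f /\
  (forall x, inTheta thbar x -> F x = RInt f 0 x) /\
  F thbar = 1.

Definition MPS (thbar : R) (f b a : R -> R) : Prop :=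
  (forall x, inTheta thbar x ->
     RInt (fun t => b t * f t) x thbar <= RInt (fun t => a t * f t) x thbar) /\
  RInt (fun t => b t * f t) 0 thbar = RInt (fun t => a t * f t) 0 thbar.

Definition S0 (thbar : R) (F f s : R -> R) : Prop :=
  (forall x, inTheta thbar x -> 0 <= s x <= 1) /\
  (forall x y, inTheta thbar x -> inTheta thbar y -> x <= y -> s x <= s y) /\
  MPS thbar f s F.

Definition U (v s : R -> R) (th : R) : R := RInt s 0 th + v th.

Definition half_fun : R -> R := fun _ => / 2.

(* After cancelling v, the claim is int_0^th s <= th / 2 for every s in
   S(0).

   Necessity: the two-step status equal to F(c)/2 below c and (1 + F(c))/2
   above c lies in S(0), and int_0^thbar s - thbar/2 = (thbar F(c) - c)/2.

   Sufficiency: the mean constraint gives int s dF = int F dF = 1/2.  With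
   G(x) = F(x) - x/thbar <= 0 and G(0) = G(thbar) = 0, integration by parts
   for the nondecreasing s gives int s dG = - int G ds >= 0, i.e.
   int_0^thbar s <= thbar/2, and for nondecreasing s the average over
   [0, th] is at most the average over [0, thbar] (Chebyshev).  A monotone s
   is only Riemann integrable, so both facts go through step functions on a
   uniform grid.  The last claim is Chebyshev's inequality for f itself. *)

From Stdlib Require Import Reals Lra.
From Coquelicot Require Import Coquelicot.
Open Scope R_scope.

Lemma ex_RInt_squeeze (f : R -> R) (a b : R) : a < b ->
  (forall eps, 0 < eps -> exists g k : R -> R,
     ex_RInt g a b /\ ex_RInt k a b /\
     (forall x, a <= x <= b -> g x <= f x <= k x) /\
     RInt k a b - RInt g a b <= eps) ->
  ex_RInt f a b.
Proof.
  intros Hab Hsq.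
  assert (Hsign : sign (b - a) = 1) by (apply sign_eq_1; lra).
  set (sums := filtermap (fun ptd => scal (sign (b - a)) (Riemann_sum f ptd))
                 (Riemann_fine a b)).
  assert (sums_proper : ProperFilter sums).
  { apply filtermap_proper_filter, Riemann_fine_filter. }
  assert (sums_cauchy : cauchy sums).
  { intros eps.
    assert (e3 : 0 < eps / 3) by (destruct eps; simpl; lra).
    destruct (Hsq _ e3) as (g & k & [Ig HIg] & [Ik HIk] & Hgk & Hgap).
    rewrite (is_RInt_unique _ _ _ _ HIg), (is_RInt_unique _ _ _ _ HIk) in Hgap.
    exists Ig.
    assert (Hfine : Riemann_fine a b (fun ptd => pointed_subdiv ptd /\
        SF_h ptd = Rmin a b /\ seq.last (SF_h ptd) (SF_lx ptd) = Rmax a b)).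
    { unfold Riemann_fine, within; apply filter_forall; auto. }
    pose proof (HIg _ (locally_ball Ig (mkposreal _ e3))) as Eg.
    pose proof (HIk _ (locally_ball Ik (mkposreal _ e3))) as Ek.
    unfold sums, filtermap in Eg, Ek |- *.
    generalize (filter_and _ _ Hfine (filter_and _ _ Eg Ek)).
    apply filter_imp; intros ptd [[Hptd [Hh Hl]] [Bg Bk]].
    rewrite Rmin_left in Hh by lra; rewrite Rmax_right in Hl by lra.
    assert (Hin : forall t, SF_h ptd <= t <= seq.last (SF_h ptd) (SF_lx ptd) ->
      a <= t <= b).
    { intros t [H1 H2]; split; [rewrite <- Hh | rewrite <- Hl]; assumption. }
    assert (Lg : Riemann_sum g ptd <= Riemann_sum f ptd).
    { apply Riemann_sum_le; auto; intros t Ht; apply Hgk, Hin, Ht. }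
    assert (Lk : Riemann_sum f ptd <= Riemann_sum k ptd).
    { apply Riemann_sum_le; auto; intros t Ht; apply Hgk, Hin, Ht. }
    change (Rabs (sign (b - a) * Riemann_sum g ptd - Ig) < eps / 3) in Bg.
    change (Rabs (sign (b - a) * Riemann_sum k ptd - Ik) < eps / 3) in Bk.
    change (Rabs (sign (b - a) * Riemann_sum f ptd - Ig) < eps).
    rewrite Hsign, Rmult_1_l in *.
    apply Rabs_def2 in Bg; apply Rabs_def2 in Bk; apply Rabs_def1; lra. }
  exists (lim sums).
  intros P [eps HP].
  apply (filter_imp (ball (lim sums) eps)); auto.
  apply complete_cauchy; auto.
Qed.

Lemma is_RInt_glue (u v w : R -> R) (a c d Iu Iv : R) :
  a <= c -> c <= d -> is_RInt u a c Iu -> is_RInt v c d Iv ->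
  (forall x, a < x < c -> w x = u x) -> (forall x, c < x < d -> w x = v x) ->
  is_RInt w a d (Iu + Iv).
Proof.
  intros hac hcd Hu Hv Eu Ev.
  apply (is_RInt_Chasles (V := R_NormedModule) w a c d).
  - apply (is_RInt_ext u); [|exact Hu].
    intros x; rewrite Rmin_left, Rmax_right by lra; intros; symmetry; auto.
  - apply (is_RInt_ext v); [|exact Hv].
    intros x; rewrite Rmin_left, Rmax_right by lra; intros; symmetry; auto.
Qed.

Lemma RInt_le_sub (f1 f2 g1 g2 : R -> R) (a b : R) : a <= b ->
  ex_RInt f1 a b -> ex_RInt f2 a b -> ex_RInt g1 a b -> ex_RInt g2 a b ->
  (forall x, a < x < b -> f1 x - f2 x <= g1 x - g2 x) ->
  RInt f1 a b - RInt f2 a b <= RInt g1 a b - RInt g2 a b.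
Proof.
  intros Hab e1 e2 e3 e4 H.
  rewrite <- (RInt_minus (V := R_CompleteNormedModule) f1 f2),
    <- (RInt_minus (V := R_CompleteNormedModule) g1 g2) by assumption.
  apply RInt_le; auto; apply (ex_RInt_minus (V := R_NormedModule)); auto.
Qed.

Lemma RInt_const_R (a b c : R) : RInt (fun _ => c) a b = c * (b - a).
Proof. rewrite (RInt_const (V := R_CompleteNormedModule)); apply Rmult_comm. Qed.

Lemma RInt_nondecreasing_avg_le (w : R -> R) (T th : R) : 0 <= th <= T ->
  (forall x y, 0 <= x -> x <= y -> y <= T -> w x <= w y) -> ex_RInt w 0 T ->
  RInt w 0 th * T <= th * RInt w 0 T.
Proof.
  intros Hth Hw Hex.
  assert (e1 : ex_RInt w 0 th)
    by (apply (ex_RInt_Chasles_1 (V := R_CompleteNormedModule) _ _ _ T); auto).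
  assert (e2 : ex_RInt w th T)
    by (apply (ex_RInt_Chasles_2 (V := R_CompleteNormedModule) _ 0); auto).
  assert (Hleft : RInt w 0 th <= w th * (th - 0)).
  { rewrite <- RInt_const_R; apply RInt_le; try lra; auto.
    - apply ex_RInt_const.
    - intros x Hx; apply Hw; lra. }
  assert (Hright : w th * (T - th) <= RInt w th T).
  { rewrite <- RInt_const_R; apply RInt_le; try lra; auto.
    - apply ex_RInt_const.
    - intros x Hx; apply Hw; lra. }
  rewrite <- (RInt_Chasles (V := R_CompleteNormedModule) w 0 th T e1 e2).
  change (plus (RInt w 0 th) (RInt w th T)) with (RInt w 0 th + RInt w th T).
  nra.
Qed.

(* [step_fun c h n] is [c m] on (m h, (m+1) h] for m < n, and [c 0] on
   (-oo, 0]. *)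
Fixpoint step_fun (c : nat -> R) (h : R) (n : nat) (x : R) : R :=
  match n with
  | O => c O
  | S m => if Rle_dec x (INR m * h) then step_fun c h m x else c m
  end.

Section StepFunctions.

Variables (c : nat -> R) (h : R) (phi : R -> R).
Hypothesis h_ge0 : 0 <= h.
Hypothesis phi_int : forall a b, ex_RInt phi a b.

Lemma is_RInt_step_fun_mul_S (n : nat) (I : R) :
  is_RInt (fun x => step_fun c h n x * phi x) 0 (INR n * h) I ->
  is_RInt (fun x => step_fun c h (S n) x * phi x) 0 (INR (S n) * h)
    (I + c n * RInt phi (INR n * h) (INR (S n) * h)).
Proof.
  intros HI.
  pose proof (pos_INR n) as n_ge0.
  rewrite S_INR in *.
  apply (is_RInt_glue (fun x => step_fun c h n x * phi x)
    (fun x => c n * phi x) (fun x => step_fun c h (S n) x * phi x)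
    0 (INR n * h)); try nra.
  - exact HI.
  - exact (is_RInt_scal (V := R_NormedModule) _ _ _ _ _
      (RInt_correct (V := R_CompleteNormedModule) _ _ _ (phi_int _ _))).
  - intros x Hx; simpl; destruct Rle_dec; [reflexivity | lra].
  - intros x Hx; simpl; destruct Rle_dec; [lra | reflexivity].
Qed.

Lemma ex_RInt_step_fun_mul (n : nat) :
  ex_RInt (fun x => step_fun c h n x * phi x) 0 (INR n * h).
Proof.
  induction n as [|n [I HI]].
  - rewrite Rmult_0_l; apply ex_RInt_point.
  - eexists; apply is_RInt_step_fun_mul_S, HI.
Qed.

Lemma RInt_step_fun_mul_S (n : nat) :
  RInt (fun x => step_fun c h (S n) x * phi x) 0 (INR (S n) * h) =
  RInt (fun x => step_fun c h n x * phi x) 0 (INR n * h)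
    + c n * RInt phi (INR n * h) (INR (S n) * h).
Proof.
  apply (is_RInt_unique (V := R_CompleteNormedModule)), is_RInt_step_fun_mul_S.
  apply (RInt_correct (V := R_CompleteNormedModule)), ex_RInt_step_fun_mul.
Qed.

End StepFunctions.

Definition step_lower (s : R -> R) (h : R) : nat -> R -> R :=
  step_fun (fun m => s (INR m * h)) h.

Definition step_upper (s : R -> R) (h : R) : nat -> R -> R :=
  step_fun (fun m => s (INR (S m) * h)) h.

Section NondecreasingSteps.

Variables (s : R -> R) (T h : R).
Hypothesis s_mono : forall x y, 0 <= x -> x <= y -> y <= T -> s x <= s y.
Hypothesis h_pos : 0 < h.

Lemma step_lower_le (n : nat) (x : R) :
  INR n * h <= T -> 0 <= x <= INR n * h -> step_lower s h n x <= s x.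
Proof.
  unfold step_lower; induction n as [|n IH]; intros HnT Hx; cbn [step_fun].
  - apply s_mono; simpl in *; lra.
  - pose proof (pos_INR n); rewrite S_INR in *.
    destruct Rle_dec.
    + apply IH; nra.
    + apply s_mono; nra.
Qed.

Lemma step_upper_ge (n : nat) (x : R) : h <= T ->
  INR n * h <= T -> 0 <= x <= INR n * h -> s x <= step_upper s h n x.
Proof.
  unfold step_upper; intros HhT; induction n as [|n IH]; intros HnT Hx; cbn [step_fun].
  - apply s_mono; simpl in *; lra.
  - pose proof (pos_INR n); rewrite S_INR in *.
    destruct Rle_dec.
    + apply IH; nra.
    + apply s_mono; rewrite ?S_INR; nra.
Qed.

Lemma RInt_step_upper_lower_mul_le (w : R -> R) (M : R) (n : nat) :
  (forall a b, ex_RInt w a b) -> (forall x, 0 <= x <= T -> w x <= M) ->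
  INR n * h <= T ->
  RInt (fun x => step_upper s h n x * w x) 0 (INR n * h)
    - RInt (fun x => step_lower s h n x * w x) 0 (INR n * h)
  <= M * h * (s (INR n * h) - s 0).
Proof.
  intros w_int w_le; unfold step_upper, step_lower.
  induction n as [|n IH]; intros HnT.
  - rewrite Rmult_0_l, !RInt_point; unfold zero; simpl; lra.
  - pose proof (pos_INR n) as n_ge0.
    rewrite !(RInt_step_fun_mul_S _ _ _ (Rlt_le _ _ h_pos) w_int).
    assert (Hw : RInt w (INR n * h) (INR (S n) * h) <= M * h).
    { rewrite S_INR in *.
      replace (M * h) with (M * ((INR n + 1) * h - INR n * h)) by ring.
      rewrite <- RInt_const_R; apply RInt_le;
        [nra | apply w_int | apply ex_RInt_const | intros x Hx; apply w_le; nra]. }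
    assert (Hs : s (INR n * h) <= s (INR (S n) * h))
      by (apply s_mono; rewrite ?S_INR in *; nra).
    assert (IHn := IH ltac:(rewrite S_INR in HnT; nra)).
    nra.
Qed.

(* Abel summation on the grid: the increments of s multiply G <= 0. *)
Lemma RInt_step_lower_mul_deriv_ge (psi G : R -> R) (n : nat) :
  (forall a b, is_RInt psi a b (G b - G a)) ->
  (forall x, 0 <= x <= T -> G x <= 0) ->
  INR n * h <= T ->
  s (INR n * h) * G (INR n * h) - s 0 * G 0
  <= RInt (fun x => step_lower s h n x * psi x) 0 (INR n * h).
Proof.
  intros psi_G G_le0; unfold step_lower.
  assert (psi_int : forall a b, ex_RInt psi a b) by (intros a b; eexists; apply psi_G).
  induction n as [|n IH]; intros HnT.
  - rewrite Rmult_0_l, RInt_point; unfold zero; simpl; lra.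
  - pose proof (pos_INR n) as n_ge0.
    rewrite (RInt_step_fun_mul_S _ _ _ (Rlt_le _ _ h_pos) psi_int).
    rewrite (is_RInt_unique (V := R_CompleteNormedModule) _ _ _ _ (psi_G _ _)).
    assert (Hs : s (INR n * h) <= s (INR (S n) * h))
      by (apply s_mono; rewrite ?S_INR in *; nra).
    assert (HG : G (INR (S n) * h) <= 0) by (apply G_le0; rewrite S_INR in *; nra).
    assert (IHn := IH ltac:(rewrite S_INR in HnT; nra)).
    nra.
Qed.

End NondecreasingSteps.

Lemma uniform_mesh (T eps : R) : 0 < T -> 0 < eps ->
  exists (N : nat) (h : R), 0 < h /\ h <= T /\ INR N * h = T /\ h < eps.
Proof.
  intros HT Heps.
  destruct (archimed_cor1 (eps / T)) as [N [HN N_pos]].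
  { apply Rdiv_lt_0_compat; lra. }
  assert (N_ge1 : 1 <= INR N) by exact (le_INR 1 N N_pos).
  exists N, (T / INR N); repeat split.
  - apply Rdiv_lt_0_compat; lra.
  - apply Rmult_le_reg_r with (INR N); [lra|].
    field_simplify; nra.
  - field; lra.
  - apply (Rmult_lt_compat_l T) in HN; [|lra].
    replace (T * (eps / T)) with eps in HN by (field; lra).
    exact HN.
Qed.

Section NondecreasingIntegrable.

Variables (s : R -> R) (T : R).
Hypothesis T_pos : 0 < T.
Hypothesis s_mono : forall x y, 0 <= x -> x <= y -> y <= T -> s x <= s y.

Lemma ex_RInt_nondecreasing_mul_nonneg (w : R -> R) (M : R) :
  (forall a b, ex_RInt w a b) -> (forall x, 0 <= x <= T -> 0 <= w x <= M) ->
  ex_RInt (fun x => s x * w x) 0 T.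
Proof.
  intros w_int w_bnd.
  assert (M_ge0 : 0 <= M) by (pose proof (w_bnd 0 ltac:(lra)); lra).
  assert (D_ge0 : 0 <= s T - s 0) by (pose proof (s_mono 0 T); lra).
  apply ex_RInt_squeeze; [exact T_pos|]; intros eps Heps.
  destruct (uniform_mesh T (eps / ((M + 1) * (s T - s 0 + 1))))
    as (N & h & h_pos & hT & NhT & h_lt); [exact T_pos | |].
  { apply Rdiv_lt_0_compat; [|apply Rmult_lt_0_compat]; lra. }
  exists (fun x => step_lower s h N x * w x), (fun x => step_upper s h N x * w x).
  rewrite <- NhT; split; [|split; [|split]].
  - apply ex_RInt_step_fun_mul; auto; lra.
  - apply ex_RInt_step_fun_mul; auto; lra.
  - intros x Hx; split; apply Rmult_le_compat_r; try (apply w_bnd; lra).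
    + apply step_lower_le with T; auto; lra.
    + apply step_upper_ge with T; auto; lra.
  - eapply Rle_trans;
      [apply (RInt_step_upper_lower_mul_le s T h s_mono h_pos w M); auto;
       [intros x Hx; apply w_bnd; auto | lra] |].
    rewrite NhT.
    apply (Rmult_lt_compat_r ((M + 1) * (s T - s 0 + 1))) in h_lt;
      [|apply Rmult_lt_0_compat; lra].
    unfold Rdiv in h_lt; rewrite Rmult_assoc, Rinv_l in h_lt by nra.
    nra.
Qed.

Lemma ex_RInt_nondecreasing_mul (w : R -> R) :
  (forall a b, ex_RInt w a b) -> ex_RInt (fun x => s x * w x) 0 T.
Proof.
  intros w_int.
  destruct (ex_RInt_ub (V := R_NormedModule) w 0 T (w_int 0 T)) as [M HM].
  rewrite Rmin_left, Rmax_right in HM by lra.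
  assert (w_bnd : forall x, 0 <= x <= T -> - M <= w x <= M)
    by (intros x Hx; apply Rabs_le_between, HM, Hx).
  apply (ex_RInt_ext (fun x => s x * (w x + M) - s x * M));
    [intros x _; simpl; ring |].
  apply (ex_RInt_minus (V := R_NormedModule)).
  - apply (ex_RInt_nondecreasing_mul_nonneg _ (M + M)).
    + intros a b; apply (ex_RInt_plus (V := R_NormedModule)); auto.
      apply ex_RInt_const.
    + intros x Hx; specialize (w_bnd x Hx); lra.
  - apply (ex_RInt_nondecreasing_mul_nonneg _ M).
    + intros; apply ex_RInt_const.
    + intros x Hx; specialize (w_bnd x Hx); lra.
Qed.

Lemma RInt_nondecreasing_mul_deriv_ge (psi G : R -> R) :
  (forall a b, is_RInt psi a b (G b - G a)) ->
  (forall x, 0 <= x <= T -> G x <= 0) ->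
  s T * G T - s 0 * G 0 <= RInt (fun x => s x * psi x) 0 T.
Proof.
  intros psi_G G_le0.
  assert (psi_int : forall a b, ex_RInt psi a b) by (intros a b; eexists; apply psi_G).
  destruct (ex_RInt_ub (V := R_NormedModule) psi 0 T (psi_int 0 T)) as [M HM].
  rewrite Rmin_left, Rmax_right in HM by lra.
  assert (psi_bnd : forall x, 0 <= x <= T -> - M <= psi x <= M)
    by (intros x Hx; apply Rabs_le_between, HM, Hx).
  assert (M_ge0 : 0 <= M) by (pose proof (psi_bnd 0 ltac:(lra)); lra).
  assert (D_ge0 : 0 <= s T - s 0) by (pose proof (s_mono 0 T); lra).
  apply Rle_plus_epsilon; intros eps Heps.
  destruct (uniform_mesh T (eps / (M * (s T - s 0) + 1)))
    as (N & h & h_pos & hT & NhT & h_lt); [exact T_pos | |].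
  { apply Rdiv_lt_0_compat; nra. }
  pose proof (RInt_step_lower_mul_deriv_ge s T h s_mono h_pos psi G N psi_G G_le0
    ltac:(lra)) as Habel.
  pose proof (RInt_step_upper_lower_mul_le s T h s_mono h_pos (fun _ => M) M N
    ltac:(intros; apply ex_RInt_const) ltac:(intros; lra) ltac:(lra)) as Hgap.
  rewrite NhT in Habel, Hgap.
  assert (Hcmp : RInt (fun x => step_lower s h N x * psi x) 0 T
      - RInt (fun x => s x * psi x) 0 T
    <= RInt (fun x => step_upper s h N x * M) 0 T
      - RInt (fun x => step_lower s h N x * M) 0 T).
  { rewrite <- NhT.
    apply RInt_le_sub; try lra.
    - apply ex_RInt_step_fun_mul; auto; lra.
    - rewrite NhT; apply ex_RInt_nondecreasing_mul; auto.
    - apply ex_RInt_step_fun_mul; [lra | intros; apply ex_RInt_const].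
    - apply ex_RInt_step_fun_mul; [lra | intros; apply ex_RInt_const].
    - intros x Hx; rewrite NhT in Hx.
      pose proof (step_lower_le s T h s_mono h_pos N x ltac:(lra) ltac:(lra)).
      pose proof (step_upper_ge s T h s_mono h_pos N x hT ltac:(lra) ltac:(lra)).
      pose proof (psi_bnd x ltac:(lra)).
      nra. }
  apply (Rmult_lt_compat_r (M * (s T - s 0) + 1)) in h_lt; [|nra].
  unfold Rdiv in h_lt; rewrite Rmult_assoc, Rinv_l in h_lt by nra.
  nra.
Qed.

End NondecreasingIntegrable.

(* f is only continuous on [0, T]; [f (clamp T x)] is a continuous
   extension to all of R, as required by the fundamental theorem of
   calculus in Coquelicot. *)
Definition clamp (T x : R) : R := Rmax 0 (Rmin x T).

Lemma clamp_inTheta (T x : R) : 0 <= T -> inTheta T (clamp T x).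
Proof. unfold inTheta, clamp, Rmax, Rmin; intros; repeat destruct Rle_dec; lra. Qed.

Lemma clamp_id (T x : R) : inTheta T x -> clamp T x = x.
Proof. unfold inTheta, clamp, Rmax, Rmin; intros; repeat destruct Rle_dec; lra. Qed.

Lemma clamp_lipschitz (T x y : R) : 0 <= T ->
  Rabs (clamp T y - clamp T x) <= Rabs (y - x).
Proof.
  unfold clamp, Rmax, Rmin; intros.
  repeat destruct Rle_dec; unfold Rabs; repeat destruct Rcase_abs; lra.
Qed.

Lemma continuous_comp_clamp (T : R) (f : R -> R) (x : R) : 0 <= T ->
  cont_on_Theta T f -> continuous (fun y => f (clamp T y)) x.
Proof.
  intros HT f_cont.
  eapply filterlim_comp; [|apply (f_cont _ (clamp_inTheta T x HT))].
  intros P [eps HP]; exists eps; intros y Hy.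
  apply HP; [|apply clamp_inTheta; auto].
  eapply Rle_lt_trans; [apply clamp_lipschitz; auto | exact Hy].
Qed.

Definition two_step (a b c : R) (x : R) : R := if Rlt_dec x c then a else b.

Lemma is_RInt_two_step_mul (a b c p q I1 I2 : R) (w : R -> R) :
  p <= c -> c <= q -> is_RInt w p c I1 -> is_RInt w c q I2 ->
  is_RInt (fun x => two_step a b c x * w x) p q (a * I1 + b * I2).
Proof.
  intros hpc hcq H1 H2.
  apply (is_RInt_glue (fun x => a * w x) (fun x => b * w x) _ p c); auto.
  - exact (is_RInt_scal (V := R_NormedModule) _ _ _ _ _ H1).
  - exact (is_RInt_scal (V := R_NormedModule) _ _ _ _ _ H2).
  - intros x Hx; unfold two_step; destruct Rlt_dec; [reflexivity | lra].
  - intros x Hx; unfold two_step; destruct Rlt_dec; [lra | reflexivity].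
Qed.

Lemma is_RInt_two_step_mul_right (a b c p q I : R) (w : R -> R) :
  c <= p -> p <= q -> is_RInt w p q I ->
  is_RInt (fun x => two_step a b c x * w x) p q (b * I).
Proof.
  intros hcp hpq H.
  apply (is_RInt_ext (fun x => b * w x)).
  - rewrite Rmin_left, Rmax_right by lra.
    intros x Hx; unfold two_step; destruct Rlt_dec; [lra | reflexivity].
  - exact (is_RInt_scal (V := R_NormedModule) _ _ _ _ _ H).
Qed.

Lemma RInt_half_fun (th : R) : RInt half_fun 0 th = th / 2.
Proof. unfold half_fun; rewrite RInt_const_R; simpl; field. Qed.

Section Distribution.

Variables (T : R) (F f fe : R -> R).
Hypothesis T_pos : 0 < T.
Hypothesis fe_cont : forall x, continuous fe x.
Hypothesis fe_nonneg : forall x, inTheta T x -> 0 <= fe x.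
Hypothesis fe_f : forall x, inTheta T x -> fe x = f x.
Hypothesis F_RInt : forall x, inTheta T x -> F x = RInt fe 0 x.
Hypothesis F_T : F T = 1.

Lemma ex_RInt_density (a b : R) : ex_RInt fe a b.
Proof. apply (ex_RInt_continuous (V := R_CompleteNormedModule)); auto. Qed.

Lemma is_derive_RInt_density (x : R) : is_derive (fun y => RInt fe 0 y) x (fe x).
Proof.
  apply (is_derive_RInt (V := R_NormedModule) fe _ 0); [|auto].
  apply filter_forall; intros b.
  apply (RInt_correct (V := R_CompleteNormedModule)), ex_RInt_density.
Qed.

Lemma is_RInt_density_primitive (a b : R) :
  is_RInt fe a b (RInt fe 0 b - RInt fe 0 a).
Proof.
  exact (is_RInt_derive (V := R_CompleteNormedModule) _ fe a b
    (fun x _ => is_derive_RInt_density x) (fun x _ => fe_cont x)).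
Qed.

Lemma is_RInt_density (a b : R) : inTheta T a -> inTheta T b ->
  is_RInt fe a b (F b - F a).
Proof. intros; rewrite !F_RInt by auto; apply is_RInt_density_primitive. Qed.

Lemma is_RInt_mul_density (w : R -> R) (a b I : R) : inTheta T a -> inTheta T b ->
  is_RInt (fun t => w t * fe t) a b I -> is_RInt (fun t => w t * f t) a b I.
Proof.
  intros [Ha0 HaT] [Hb0 HbT]; apply is_RInt_ext; intros t Ht.
  rewrite fe_f; [reflexivity|].
  split; [apply Rle_trans with (Rmin a b) | apply Rle_trans with (Rmax a b)];
    try lra; [apply Rmin_glb | apply Rmax_lub]; lra.
Qed.

Lemma F_0 : F 0 = 0.
Proof.
  rewrite F_RInt by (unfold inTheta; lra).
  apply (RInt_point (V := R_CompleteNormedModule)).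
Qed.

Lemma F_nondecreasing (x y : R) : 0 <= x -> x <= y -> y <= T -> F x <= F y.
Proof.
  intros Hx Hxy Hy.
  assert (H := RInt_ge_0 fe x y Hxy (ex_RInt_density x y)
    ltac:(intros t Ht; apply fe_nonneg; unfold inTheta; lra)).
  rewrite (is_RInt_unique (V := R_CompleteNormedModule) _ _ _ _
    (is_RInt_density x y ltac:(unfold inTheta; lra) ltac:(unfold inTheta; lra))) in H.
  lra.
Qed.

Lemma F_range (x : R) : inTheta T x -> 0 <= F x <= 1.
Proof.
  intros [Hx0 HxT]; rewrite <- F_0, <- F_T.
  split; apply F_nondecreasing; lra.
Qed.

Lemma RInt_F_mul_density (x : R) : inTheta T x ->
  RInt (fun t => F t * f t) x T = (1 - F x ^ 2) / 2.
Proof.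
  intros Hx.
  assert (HT : inTheta T T) by (unfold inTheta; lra).
  set (P := fun y => RInt fe 0 y).
  apply (is_RInt_unique (V := R_CompleteNormedModule)).
  apply (is_RInt_mul_density F x T _ Hx HT).
  apply (is_RInt_ext (fun t => P t * fe t)).
  { intros t Ht; unfold P; rewrite F_RInt; [reflexivity|].
    destruct Hx; rewrite Rmin_left, Rmax_right in Ht by lra; unfold inTheta; lra. }
  replace ((1 - F x ^ 2) / 2) with (/ 2 * (P T * P T) - / 2 * (P x * P x))
    by (unfold P; rewrite <- !F_RInt, F_T by auto; field).
  apply (is_RInt_derive (V := R_CompleteNormedModule) (fun y => / 2 * (P y * P y))).
  - intros t _.
    pose proof (is_derive_scal _ t (/ 2) _ (is_derive_mult P P t _ _
      (is_derive_RInt_density t) (is_derive_RInt_density t) Rmult_comm)) as D.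
    replace (P t * fe t) with (/ 2 * (fe t * P t + P t * fe t)) by field.
    exact D.
  - intros t _; apply (continuous_mult P fe); [|auto].
    apply (ex_derive_continuous (K := R_AbsRing) (V := R_NormedModule)).
    eexists; apply is_derive_RInt_density.
Qed.


Lemma RInt_two_step_mul_density_left (a b c p : R) : 0 <= p -> p <= c -> c <= T ->
  RInt (fun t => two_step a b c t * f t) p T = a * (F c - F p) + b * (1 - F c).
Proof.
  intros Hp Hpc HcT; rewrite <- F_T.
  apply (is_RInt_unique (V := R_CompleteNormedModule)).
  apply is_RInt_mul_density; try (unfold inTheta; lra).
  apply is_RInt_two_step_mul; try lra; apply is_RInt_density; unfold inTheta; lra.
Qed.

Lemma RInt_two_step_mul_density_right (a b c p : R) : c <= p -> 0 <= p -> p <= T ->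
  RInt (fun t => two_step a b c t * f t) p T = b * (1 - F p).
Proof.
  intros Hcp Hp HpT; rewrite <- F_T.
  apply (is_RInt_unique (V := R_CompleteNormedModule)).
  apply is_RInt_mul_density; try (unfold inTheta; lra).
  apply is_RInt_two_step_mul_right; try lra; apply is_RInt_density; unfold inTheta; lra.
Qed.

Lemma two_step_S0 (c : R) : inTheta T c ->
  S0 T F f (two_step (F c / 2) ((1 + F c) / 2) c).
Proof.
  intros Hc.
  pose proof (F_range c Hc) as Fc.
  destruct Hc as [Hc0 HcT].
  split; [|split; [|split]].
  - intros x _; unfold two_step; destruct Rlt_dec; lra.
  - intros x y _ _ Hxy; unfold two_step; repeat destruct Rlt_dec; lra.
  - intros x Hx; rewrite RInt_F_mul_density by exact Hx.
    pose proof (F_range x Hx) as Fx; destruct Hx as [Hx0 HxT].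
    destruct (Rle_lt_dec x c) as [Hxc | Hcx].
    + rewrite RInt_two_step_mul_density_left by lra.
      pose proof (F_nondecreasing x c Hx0 Hxc HcT).
      assert (0 <= F x * (F c - F x)) by (apply Rmult_le_pos; lra).
      nra.
    + rewrite RInt_two_step_mul_density_right by lra.
      pose proof (F_nondecreasing c x Hc0 (Rlt_le _ _ Hcx) HxT).
      assert (0 <= (1 - F x) * (F x - F c)) by (apply Rmult_le_pos; lra).
      nra.
  - rewrite RInt_F_mul_density, RInt_two_step_mul_density_left, F_0 by
      (unfold inTheta; lra).
    simpl; field.
Qed.

Lemma cdf_le_uniform_of_half_optimal (v : R -> R) :
  (forall th, inTheta T th -> forall s, S0 T F f s -> U v s th <= U v half_fun th) ->
  forall c, inTheta T c -> F c <= c / T.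
Proof.
  intros Hopt c Hc.
  pose proof (Hopt T ltac:(unfold inTheta; lra) _ (two_step_S0 c Hc)) as H.
  unfold U in H; rewrite RInt_half_fun in H.
  pose proof (F_range c Hc) as Fc; destruct Hc as [Hc0 HcT].
  assert (Hs : RInt (two_step (F c / 2) ((1 + F c) / 2) c) 0 T
               = F c / 2 * c + (1 + F c) / 2 * (T - c)).
  { apply (is_RInt_unique (V := R_CompleteNormedModule)).
    apply (is_RInt_ext (fun x => two_step (F c / 2) ((1 + F c) / 2) c x * 1));
      [intros; apply Rmult_1_r |].
    replace (F c / 2 * c + (1 + F c) / 2 * (T - c))
      with (F c / 2 * ((c - 0) * 1) + (1 + F c) / 2 * ((T - c) * 1)) by ring.
    apply is_RInt_two_step_mul; try lra;
      apply (is_RInt_const (V := R_NormedModule)). }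
  rewrite Hs in H.
  apply Rmult_le_reg_r with T; [lra|].
  unfold Rdiv; rewrite Rmult_assoc, Rinv_l by lra.
  lra.
Qed.

Lemma S0_nondecreasing (s : R -> R) : S0 T F f s ->
  forall x y, 0 <= x -> x <= y -> y <= T -> s x <= s y.
Proof. intros [_ [s_mono _]] x y Hx Hxy Hy; apply s_mono; unfold inTheta; lra. Qed.

Lemma S0_ex_RInt (s : R -> R) : S0 T F f s -> ex_RInt s 0 T.
Proof.
  intros Hs; apply (ex_RInt_ext (fun x => s x * 1)); [intros x _; simpl; ring |].
  apply ex_RInt_nondecreasing_mul; [exact T_pos | apply S0_nondecreasing, Hs |].
  intros; apply ex_RInt_const.
Qed.

Lemma S0_RInt_mul_density (s : R -> R) : S0 T F f s ->
  RInt (fun x => s x * fe x) 0 T = 1 / 2.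
Proof.
  intros Hs.
  assert (HT : inTheta T T) by (unfold inTheta; lra).
  assert (H0 : inTheta T 0) by (unfold inTheta; lra).
  assert (s_fe_int : ex_RInt (fun x => s x * fe x) 0 T).
  { apply ex_RInt_nondecreasing_mul; [exact T_pos | apply S0_nondecreasing, Hs |].
    exact ex_RInt_density. }
  rewrite <- (is_RInt_unique (V := R_CompleteNormedModule) _ _ _ _
    (is_RInt_mul_density s 0 T _ H0 HT
       (RInt_correct (V := R_CompleteNormedModule) _ _ _ s_fe_int))).
  destruct Hs as [_ [_ [_ s_mean]]].
  rewrite s_mean, RInt_F_mul_density, F_0 by exact H0; simpl; field.
Qed.

Lemma S0_RInt_total_le_half (s : R -> R) : (forall x, inTheta T x -> F x <= x / T) ->
  S0 T F f s -> RInt s 0 T <= T / 2.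
Proof.
  intros F_le Hs.
  set (G := fun x => RInt fe 0 x - x / T).
  assert (psi_G : forall a b, is_RInt (fun x => fe x - / T) a b (G b - G a)).
  { intros a b.
    replace (G b - G a) with (RInt fe 0 b - RInt fe 0 a - (b - a) * / T)
      by (unfold G; field; lra).
    exact (is_RInt_minus (V := R_NormedModule) _ _ _ _ _ _
      (is_RInt_density_primitive a b)
      (is_RInt_const (V := R_NormedModule) a b (/ T))). }
  assert (G_le0 : forall x, 0 <= x <= T -> G x <= 0).
  { intros x Hx; unfold G; rewrite <- F_RInt by exact Hx.
    pose proof (F_le x Hx); lra. }
  assert (G_ends : G T = 0 /\ G 0 = 0).
  { unfold G; rewrite <- !F_RInt, F_T, F_0 by (unfold inTheta; lra).
    split; field; lra. }
  pose proof (RInt_nondecreasing_mul_deriv_ge s T T_pos (S0_nondecreasing s Hs)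
    _ G psi_G G_le0) as Hibp.
  destruct G_ends as [GT G0]; rewrite GT, G0 in Hibp.
  assert (Hsplit : RInt (fun x => s x * (fe x - / T)) 0 T
                   = RInt (fun x => s x * fe x) 0 T - / T * RInt s 0 T).
  { apply (is_RInt_unique (V := R_CompleteNormedModule)).
    apply (is_RInt_ext (fun x => s x * fe x - / T * s x)); [intros x _; simpl; ring |].
    apply (is_RInt_minus (V := R_NormedModule)).
    - apply (RInt_correct (V := R_CompleteNormedModule)).
      apply ex_RInt_nondecreasing_mul; [exact T_pos | apply S0_nondecreasing, Hs |].
      exact ex_RInt_density.
    - apply (is_RInt_scal (V := R_NormedModule)).
      apply (RInt_correct (V := R_CompleteNormedModule)), S0_ex_RInt, Hs. }
  rewrite Hsplit, S0_RInt_mul_density in Hibp by exact Hs.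
  apply (Rmult_le_compat_l T) in Hibp; [|lra].
  replace (T * (1 / 2 - / T * RInt s 0 T)) with (T / 2 - RInt s 0 T)
    in Hibp by (field; lra).
  lra.
Qed.

Lemma S0_RInt_le_half (s : R -> R) : (forall x, inTheta T x -> F x <= x / T) ->
  S0 T F f s -> forall th, inTheta T th -> RInt s 0 th <= th / 2.
Proof.
  intros F_le Hs th Hth.
  pose proof (S0_RInt_total_le_half s F_le Hs) as Htotal.
  pose proof (RInt_nondecreasing_avg_le s T th Hth (S0_nondecreasing s Hs)
    (S0_ex_RInt s Hs)) as Hcheb.
  destruct Hth.
  apply Rmult_le_reg_r with T; [lra | nra].
Qed.

Lemma cdf_le_uniform_of_density_nondecreasing :
  (forall x y, inTheta T x -> inTheta T y -> x <= y -> f x <= f y) ->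
  forall th, inTheta T th -> F th <= th / T.
Proof.
  intros f_mono th Hth.
  assert (fe_mono : forall x y, 0 <= x -> x <= y -> y <= T -> fe x <= fe y)
    by (intros; rewrite !fe_f by (unfold inTheta; lra); apply f_mono;
        unfold inTheta; lra).
  pose proof (RInt_nondecreasing_avg_le fe T th Hth fe_mono (ex_RInt_density 0 T))
    as Hcheb.
  rewrite <- !F_RInt, F_T in Hcheb by (unfold inTheta in *; lra).
  apply Rmult_le_reg_r with T; [lra|].
  unfold Rdiv; rewrite Rmult_assoc, Rinv_l by lra.
  lra.
Qed.

End Distribution.

Theorem mainTheorem16 (thbar : R) (F f v : R -> R) :
  0 < thbar ->
  is_cdf_with_density thbar F f ->
  (forall x, inTheta thbar x -> 0 <= v x) ->
  diff_on_Theta thbar v ->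
  ((forall th, inTheta thbar th -> forall s, S0 thbar F f s ->
       U v s th <= U v half_fun th)
   <-> (forall th, inTheta thbar th -> F th <= th / thbar))
  /\
  ((forall x y, inTheta thbar x -> inTheta thbar y -> x <= y -> f x <= f y) ->
   forall th, inTheta thbar th -> F th <= th / thbar).
Proof.
  (* v cancels. *)
  intros HT [f_pos [f_cont [F_def F_T]]] _ _.
  set (fe := fun x => f (clamp thbar x)).
  assert (fe_cont : forall x, continuous fe x)
    by (intros; apply continuous_comp_clamp; auto; lra).
  assert (fe_f : forall x, inTheta thbar x -> fe x = f x)
    by (intros; unfold fe; rewrite clamp_id; auto).
  assert (fe_nonneg : forall x, inTheta thbar x -> 0 <= fe x)
    by (intros; rewrite fe_f; auto; apply Rlt_le, f_pos; auto).
  assert (F_RInt : forall x, inTheta thbar x -> F x = RInt fe 0 x).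
  { intros x [Hx0 HxT]; rewrite F_def by (split; auto).
    apply RInt_ext; rewrite Rmin_left, Rmax_right by lra.
    intros t Ht; symmetry; apply fe_f; unfold inTheta; lra. }
  split; [split|].
  - apply (cdf_le_uniform_of_half_optimal thbar F f fe); auto.
  - intros F_le th Hth s Hs; unfold U; apply Rplus_le_compat_r.
    rewrite RInt_half_fun; apply (S0_RInt_le_half thbar F f fe); auto.
  - apply (cdf_le_uniform_of_density_nondecreasing thbar F f fe); auto.
Qed.
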